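(* Let $S$ be the vertex set of an acute $0/1$-simplex in $[0,1]^n$ with $k\leq n$ vertices, and let $m\geq1$. Regard $[0,1]^n$ as the facet of $[0,1]^{n+m}$ consisting of points whose last $m$ coordinates vanish, so that $S$ is also the vertex set of an acute $0/1$-simplex in $[0,1]^{n+m}$. Then $$\mathcal{C}^{n+m}(S)=\left\{\begin{bmatrix}v\\ w\end{bmatrix}: v\in\mathcal{C}^n(S),\ w\in\{0,1\}^m\right\},\qquad \mathcal{A}^{n+m}(S)\supseteq\left\{\begin{bmatrix}v\\ w\end{bmatrix}: v\in\mathcal{A}^n(S),\ w\in\{0,1\}^m\right\}.$$ Moreover, for each $v\in\mathcal{C}^n(S)$ there exists an integer $\ell$ such that, for $w\in\{0,1\}^m$ (with $m$ large enough), $w^\top w\geq\ell$ if and only if $\begin{bmatrix}v\\ w\end{bmatrix}\in\mathcal{A}^{n+m}(S)$.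
   Context: A set of $j+1$ affinely independent points $a_0,\dots,a_j\in\{0,1\}^N$ is the vertex set of an acute $0/1$-$j$-simplex if all dihedral angles of their convex hull are acute; equivalently, with $P=[a_1-a_0,\dots,a_j-a_0]$ and $G=P^\top P$, every off-diagonal entry of $G^{-1}$ is negative and every row sum of $G^{-1}$ is positive. For the vertex set $S\subseteq\{0,1\}^N$ of an acute $0/1$-simplex: the set of acute extensions $\mathcal{A}^N(S)$ consists of all $v\in\{0,1\}^N$ such that $S\cup\{v\}$ is the vertex set of an acute $0/1$-simplex with one more vertex; the set of candidate acute extensions $\mathcal{C}^N(S)$ consists of all $v\in\{0,1\}^N$ whose orthogonal projection onto the affine hull of $S$ lies in the (relative) interior of the convex hull of $S$. *)

From HB Require Import structures.
From mathcomp Require Import all_boot all_order all_algebra.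
Set Implicit Arguments. Unset Strict Implicit. Unset Printing Implicit Defensive.
Import Order.TTheory GRing.Theory Num.Theory.
Local Open Scope ring_scope.

(* 0/1 points of R^N, i.e. elements of {0,1}^N, as bit vectors. *)
Definition bv (N : nat) := {ffun 'I_N -> bool}.

Definition bv0 (N : nat) : bv N := [ffun => false].

Section Geometry.
Variable R : realFieldType.

Definition vec (N : nat) (x : bv N) : 'cV[R]_N := \col_i (x i)%:R.

Definition dot (N : nat) (x y : 'cV[R]_N) : R := \sum_i x i 0 * y i 0.

(* For an ordering s = [a_0; a_1; ...; a_j] of the vertices:
   P = [a_1 - a_0, ..., a_j - a_0], G = P^T P; the simplex is acute iff
   G is invertible (affine independence), every off-diagonal entry of G^{-1}
   is negative and every row sum of G^{-1} is positive. *)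
Definition edge_mx (N : nat) (s : seq (bv N)) : 'M[R]_(N, (size s).-1) :=
  \matrix_(r, c) (vec (nth (bv0 N) s c.+1) r 0 - vec (head (bv0 N) s) r 0).

Definition gram_mx (N : nat) (s : seq (bv N)) : 'M[R]_((size s).-1) :=
  (edge_mx s)^T *m edge_mx s.

Definition acute_seq (N : nat) (s : seq (bv N)) : bool :=
  let G := gram_mx s in
  [&& G \in unitmx,
      [forall i, forall k, (i != k) ==> (invmx G i k < 0)] &
      [forall i, 0 < \sum_k invmx G i k]].

Definition is_acute (N : nat) (S : {set bv N}) : Prop :=
  exists s : seq (bv N), [/\ (0 < size s)%N, uniq s, S =i s & acute_seq s].

Definition acute_ext (N : nat) (S : {set bv N}) (v : bv N) : Prop :=
  v \notin S /\ is_acute (v |: S).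

(* Candidate acute extensions C^N(S): the orthogonal projection p of v onto
   aff(S) lies in the relative interior of conv(S), i.e. p = sum lam_x x with
   all lam_x > 0, sum lam_x = 1, and v - p orthogonal to aff(S). *)
Definition cand_ext (N : nat) (S : {set bv N}) (v : bv N) : Prop :=
  exists lam : bv N -> R,
    [/\ (forall x, x \in S -> 0 < lam x),
        \sum_(x in S) lam x = 1 &
        forall x y, x \in S -> y \in S ->
          dot (vec v - \sum_(z in S) lam z *: vec z) (vec x - vec y) = 0].

End Geometry.

Definition catbv (n m : nat) (v : bv n) (w : bv m) : bv (n + m) :=
  [ffun i => match split i with inl a => v a | inr b => w b end].

Definition embedS (n m : nat) (S : {set bv n}) : {set bv (n + m)} :=
  [set catbv x (bv0 m) | x in S].

Definition wtw (m : nat) (w : bv m) : nat := \sum_i (w i : nat).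

(* Order the vertices of an acute simplex as a_0, ..., a_j and let G be the Gram
   matrix of the edges a_i - a_0.  Replacing the vertex a_r by [a_r; w] (and the
   other vertices by [a_i; 0]) changes G by the rank-one term (w^T w) c c^T, where
   c is the all-ones vector if r = 0 and the unit vector e_r otherwise.  By the
   Sherman-Morrison formula, adding t c c^T with t >= 0 preserves the sign pattern
   of G^-1 that characterises acuteness.  Hence acute extensions stay acute after
   lifting, and acuteness of [v; w] is monotone in w^T w, so l can be taken to be
   the least weight that works, provided some weight works.
   For a candidate v, appending v as a last vertex borders G by the column G y,
   where y are the barycentric weights of the projection of v; the inverse of the
   bordered matrix is explicit in terms of the Schur complement d, which grows
   with w^T w, and it has the acute sign pattern once d is large.  The Gram data
   are rational, so an integral threshold exists even over a non-archimedean
   field.  Candidate extensions lift because the new coordinates are orthogonal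
   to the affine hull of S. *)

From HB Require Import structures.
From mathcomp Require Import all_boot all_order all_algebra.
From mathcomp Require Import ring lra.
From Stdlib Require Import Classical_Prop Wf_nat.
Import Order.TTheory GRing.Theory Num.Theory.
Local Open Scope ring_scope.
Set Implicit Arguments. Unset Strict Implicit. Unset Printing Implicit Defensive.

Section AcuteMatrix.
Variable R : realFieldType.

Definition acute_mx K (G : 'M[R]_K) : bool :=
  [&& G \in unitmx,
      [forall i, forall k, (i != k) ==> (invmx G i k < 0)] &
      [forall i, 0 < \sum_k invmx G i k]].

Lemma acute_mxP K (G : 'M[R]_K) :
  reflect [/\ G \in unitmx, forall i k, i != k -> invmx G i k < 0 &
              forall i, 0 < \sum_k invmx G i k] (acute_mx G).
Proof.
apply: (iffP and3P) => [[uG /forallP off /forallP rs]|[uG off rs]]; split => //.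
- by move=> i k ik; move/forallP/(_ k)/implyP: (off i); apply.
- by apply/forallP => i; apply/forallP => k; apply/implyP; apply: off.
- exact/forallP.
Qed.

Definition acute_fun K (f : nat -> nat -> R) := acute_mx (\matrix_(i < K, k < K) f i k).

Lemma eq_acute_fun K f g : (forall i k, (i < K)%N -> (k < K)%N -> f i k = g i k) ->
  acute_fun K f = acute_fun K g.
Proof. by move=> fg; congr acute_mx; apply/matrixP => i k; rewrite !mxE fg. Qed.

Lemma invmx_sym K (G : 'M[R]_K) i k : G^T = G -> invmx G i k = invmx G k i.
Proof. by move=> sG; rewrite -[in LHS]sG -trmx_inv mxE. Qed.

Lemma mulmx_rank1_update K (G : 'M[R]_K) (c : 'cV_K) t a :
  G \in unitmx -> G^T = G -> (c^T *m (invmx G *m c)) 0 0 = a -> 1 + t * a != 0 ->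
  (G + t *: (c *m c^T)) *m
    (invmx G - (t / (1 + t * a)) *: (invmx G *m c *m (invmx G *m c)^T)) = 1%:M.
Proof.
move=> uG sG aE na; set M := invmx G; set h := M *m c.
have cM : c^T *m M = h^T by rewrite trmx_mul trmx_inv sG.
have hc : h^T *m c = a%:M by rewrite -cM -mulmxA [LHS]mx11_scalar aE.
rewrite mulmxDl !mulmxBr mulmxV // -!scalemxAl -!scalemxAr !mulmxA.
rewrite mulmxV // mul1mx.
rewrite -(mulmxA c c^T M) cM -(mulmxA c h^T c) hc mul_mx_scalar -scalemxAl !scalerA.
have -> : t * (t / (1 + t * a) * a) = t - t / (1 + t * a) by field.
by rewrite scalerBl opprB (addrC (t *: _)) !subrK.
Qed.

End AcuteMatrix.

Section RankOneUpdate.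
Variables (R : realFieldType) (K : nat) (G : 'M[R]_K) (t : R).
Hypotheses (aG : acute_mx G) (sG : G^T = G) (t_ge0 : 0 <= t).

Let M := invmx G.

Lemma acute_mx_rank1_update (c : 'cV_K) (h : 'I_K -> R) (a : R) :
  (forall i, (M *m c) i 0 = h i) -> (c^T *m (M *m c)) 0 0 = a -> 0 <= a ->
  let kk := t / (1 + t * a) in
  (forall i k, i != k -> M i k - kk * h i * h k < 0) ->
  (forall i, 0 < \sum_k M i k - kk * h i * \sum_k h k) ->
  acute_mx (G + t *: (c *m c^T)).
Proof.
move=> hE aE a_ge0 kk off rs; have /acute_mxP[uG _ _] := aG.
have na : 1 + t * a != 0 by rewrite gt_eqF // ltr_pwDl // mulr_ge0.
have E := mulmx_rank1_update uG sG aE na.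
have [uF _] := mulmx1_unit E.
have iE : invmx (G + t *: (c *m c^T)) = M - kk *: (M *m c *m (M *m c)^T).
  by rewrite -[RHS](mulKmx uF) E mulmx1.
have {}hE i : \sum_j M i j * c j 0 = h i by rewrite -hE mxE.
apply/acute_mxP; rewrite iE; split => //.
- by move=> i k ik; rewrite !mxE big_ord1 !mxE mulrA !hE; apply: off.
- move=> i; rewrite (eq_bigr (fun k => M i k - kk * h i * h k)) ?sumrB -?mulr_sumr //.
  by move=> k _; rewrite !mxE big_ord1 !mxE mulrA !hE.
Qed.

Lemma rank1_coef_bounds (a : R) : 0 <= a ->
  0 <= t / (1 + t * a) /\ 0 < 1 - t / (1 + t * a) * a.
Proof.
move=> a_ge0; have d_gt0 : 0 < 1 + t * a by rewrite ltr_pwDl // mulr_ge0.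
split; first by rewrite divr_ge0 // ltW.
have -> : 1 - t / (1 + t * a) * a = (1 + t * a)^-1 by field; rewrite gt_eqF.
by rewrite invr_gt0.
Qed.

Let rs i := \sum_k M i k.

Lemma acute_mx_rank1_const (c := const_mx 1 : 'cV_K) : acute_mx (G + t *: (c *m c^T)).
Proof.
have /acute_mxP[_ off rs_gt0] := aG; rewrite -/M in off.
have {}rs_gt0 i : 0 < rs i := rs_gt0 i.
have rs_ge0 i : 0 <= rs i := ltW (rs_gt0 i).
have hE i : (M *m c) i 0 = rs i.
  by rewrite mxE; apply: eq_bigr => k _; rewrite mxE mulr1.
have aE : (c^T *m (M *m c)) 0 0 = \sum_i rs i.
  by rewrite mxE; apply: eq_bigr => i _; rewrite hE !mxE mul1r.
have a_ge0 : 0 <= \sum_i rs i by rewrite sumr_ge0 // => i _; exact/ltW.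
pose kk := t / (1 + t * \sum_i rs i).
have [kk_ge0 kk_lt] : 0 <= kk /\ 0 < 1 - kk * \sum_i rs i := rank1_coef_bounds a_ge0.
apply: (acute_mx_rank1_update hE aE) => //; rewrite -/kk.
- move=> i k ik; have := off i k ik; have := mulr_ge0 (mulr_ge0 kk_ge0 (rs_ge0 i)) (rs_ge0 k).
  lra.
- move=> i.
  have -> : rs i - kk * rs i * \sum_i rs i = (1 - kk * \sum_i rs i) * rs i by ring.
  by rewrite mulr_gt0 ?rs_gt0.
Qed.

Lemma acute_mx_rank1_delta (p : 'I_K) (c := delta_mx p 0 : 'cV_K) :
  acute_mx (G + t *: (c *m c^T)).
Proof.
have /acute_mxP[_ off rs_gt0] := aG; rewrite -/M in off.
have {}rs_gt0 i : 0 < rs i := rs_gt0 i.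
have sM i k : M i k = M k i := invmx_sym i k sG.
have hE i : (M *m c) i 0 = M i p.
  rewrite mxE (bigD1 p) //= !mxE !eqxx mulr1 big1 ?addr0 // => k /negbTE kp.
  by rewrite !mxE kp mulr0.
have aE : (c^T *m (M *m c)) 0 0 = M p p.
  rewrite mxE (bigD1 p) //= hE !mxE !eqxx mul1r big1 ?addr0 // => k /negbTE kp.
  by rewrite !mxE kp mul0r.
have a_gt0 : 0 < M p p.
  have : \sum_(k | k != p) M p k <= 0.
    by rewrite -oppr_ge0 -sumrN sumr_ge0 // => k kp; rewrite oppr_ge0 ltW // off // eq_sym.
  by have := rs_gt0 p; rewrite /rs (bigD1 p) //=; lra.
pose kk := t / (1 + t * M p p).
have [kk_ge0 kk_lt] : 0 <= kk /\ 0 < 1 - kk * M p p := rank1_coef_bounds (ltW a_gt0).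
have scale x : x - kk * M p p * x = (1 - kk * M p p) * x by ring.
apply: (acute_mx_rank1_update hE aE (ltW a_gt0)); rewrite -/kk.
- move=> i k; have [-> pk|ip] := eqVneq i p.
    by rewrite [M k p]sM scale pmulr_rlt0 // off.
  have [-> _|kp ik] := eqVneq k p; first by rewrite mulrAC scale pmulr_rlt0 // off.
  have := off i k ik.
  have := mulr_le0 (mulr_ge0_le0 kk_ge0 (ltW (off _ _ ip))) (ltW (off _ _ kp)).
  lra.
- move=> i; rewrite -/(rs i); under [X in _ * X]eq_bigr do rewrite sM.
  rewrite -/(rs p).
  have [->|ip] := eqVneq i p; first by rewrite scale mulr_gt0.
  have := mulr_le0_ge0 (mulr_ge0_le0 kk_ge0 (ltW (off _ _ ip))) (ltW (rs_gt0 p)).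
  by have := rs_gt0 i; lra.
Qed.

End RankOneUpdate.

Section VertexLift.
Variable R : realFieldType.

(* Moving the vertex a_r by u changes the edge a_(i+1) - a_0 by
   +-[lift_coef r i] u, the sign being - for r = 0. *)
Definition lift_coef (r i : nat) : R := if r is p.+1 then (i == p)%:R else 1.

Lemma acute_fun_lift K (f : nat -> nat -> R) r t :
  (forall i k, f i k = f k i) -> (r <= K)%N -> 0 <= t -> acute_fun K f ->
  acute_fun K (fun i k => f i k + t * lift_coef r i * lift_coef r k).
Proof.
rewrite /acute_fun; set G := \matrix_(i < K, k < K) f i k => fC rK t_ge0 aG.
have sG : G^T = G by apply/matrixP => i k; rewrite !mxE fC.
case: r rK => [|p] pK.
- have := acute_mx_rank1_const aG sG t_ge0; congr acute_mx.
  by apply/matrixP => i k; rewrite !mxE big_ord1 !mxE !mulr1.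
- have := acute_mx_rank1_delta aG sG t_ge0 (Ordinal pK); congr acute_mx.
  by apply/matrixP => i k; rewrite !mxE big_ord1 !mxE !andbT mulrA.
Qed.

Lemma acute_fun_lift_mono K (f : nat -> nat -> R) r t1 t2 :
  (forall i k, f i k = f k i) -> (r <= K)%N -> t1 <= t2 ->
  acute_fun K (fun i k => f i k + t1 * lift_coef r i * lift_coef r k) ->
  acute_fun K (fun i k => f i k + t2 * lift_coef r i * lift_coef r k).
Proof.
move=> fC rK t12 aF.
pose g i k := f i k + t1 * lift_coef r i * lift_coef r k.
have gC i k : g i k = g k i by rewrite /g fC mulrAC.
have := acute_fun_lift gC rK (_ : 0 <= t2 - t1) aF; rewrite subr_ge0 => /(_ t12).
rewrite (eq_acute_fun (g := fun i k => f i k + t2 * lift_coef r i * lift_coef r k)) //.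
by move=> i k _ _; rewrite /g; ring.
Qed.

End VertexLift.

Section GramEntries.
Variable R : realFieldType.

Definition edge N (s : seq (bv N)) (i : nat) : 'cV[R]_N :=
  vec R (nth (bv0 N) s i.+1) - vec R (nth (bv0 N) s 0).

Definition gram_entry N (s : seq (bv N)) (i k : nat) : R := dot (edge s i) (edge s k).

Lemma dotC N (X Y : 'cV[R]_N) : dot X Y = dot Y X.
Proof. by apply: eq_bigr => i _; rewrite mulrC. Qed.

Lemma gram_entryC N (s : seq (bv N)) i k : gram_entry s i k = gram_entry s k i.
Proof. exact: dotC. Qed.

Lemma acute_seqE N (s : seq (bv N)) : acute_seq R s = acute_fun (size s).-1 (gram_entry s).
Proof.
rewrite /acute_seq /acute_fun -/(acute_mx _); congr acute_mx; apply/matrixP => i k.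
by rewrite !mxE; apply: eq_bigr => j _; rewrite !mxE -nth0.
Qed.

Definition lifted_gram N (s : seq (bv N)) (r : nat) (t : R) (i k : nat) : R :=
  gram_entry s i k + t * lift_coef R r i * lift_coef R r k.

End GramEntries.

Arguments lifted_gram R {N}.

Section Concatenation.
Variables n m : nat.

Definition fstb (u : bv (n + m)) : bv n := [ffun i => u (lshift m i)].
Definition sndb (u : bv (n + m)) : bv m := [ffun j => u (rshift n j)].

Lemma catbv_lshift (v : bv n) (w : bv m) i : catbv v w (lshift m i) = v i.
Proof. by rewrite ffunE (unsplitK (inl _ i)). Qed.

Lemma catbv_rshift (v : bv n) (w : bv m) j : catbv v w (rshift n j) = w j.
Proof. by rewrite ffunE (unsplitK (inr _ j)). Qed.

Lemma catbvK (u : bv (n + m)) : catbv (fstb u) (sndb u) = u.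
Proof. by apply/ffunP => i; rewrite ffunE; case: split_ordP => j ->; rewrite ffunE. Qed.

Lemma fstb_cat (v : bv n) (w : bv m) : fstb (catbv v w) = v.
Proof. by apply/ffunP => i; rewrite ffunE catbv_lshift. Qed.

Lemma sndb_cat (v : bv n) (w : bv m) : sndb (catbv v w) = w.
Proof. by apply/ffunP => j; rewrite ffunE catbv_rshift. Qed.

Lemma catbv_inj (v v' : bv n) (w w' : bv m) :
  catbv v w = catbv v' w' -> v = v' /\ w = w'.
Proof.
move=> E; split; first by rewrite -(fstb_cat v w) E fstb_cat.
by rewrite -(sndb_cat v w) E sndb_cat.
Qed.

Lemma catbv0 : catbv (bv0 n) (bv0 m) = bv0 (n + m).
Proof. by apply/ffunP => i; rewrite !ffunE; case: split => j; rewrite ffunE. Qed.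

Lemma mem_embedS (S : {set bv n}) (v : bv n) (w : bv m) :
  (catbv v w \in embedS m S) = (v \in S) && (w == bv0 m).
Proof.
apply/imsetP/andP => [[x xS /catbv_inj[-> ->]]|[vS /eqP ->]] //.
by exists v.
Qed.

Definition lift_seq (p1 : seq (bv n)) (v : bv n) (w : bv m) (p2 : seq (bv n)) :=
  [seq catbv x (bv0 m) | x <- p1] ++ catbv v w :: [seq catbv x (bv0 m) | x <- p2].

Lemma nth_lift_seq p1 v w p2 i :
  nth (bv0 (n + m)) (lift_seq p1 v w p2) i =
  catbv (nth (bv0 n) (p1 ++ v :: p2) i) (if i == size p1 then w else bv0 m).
Proof.
have nth_map0 (s : seq (bv n)) j :
    nth (bv0 (n + m)) [seq catbv x (bv0 m) | x <- s] j = catbv (nth (bv0 n) s j) (bv0 m).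
  have [js|js] := ltnP j (size s); first by rewrite (nth_map (bv0 n)).
  by rewrite !nth_default ?size_map ?catbv0.
rewrite !nth_cat size_map; have [ip|pi] := ltnP i (size p1).
  by rewrite (ltn_eqF ip) nth_map0.
have [j ->] : exists j, i = (size p1 + j)%N by exists (i - size p1)%N; rewrite subnKC.
by rewrite addKn -[X in _ == X]addn0 eqn_add2l; case: j => //= j; apply: nth_map0.
Qed.

End Concatenation.

Section LiftedGram.
Variables (R : realFieldType) (n m : nat).

Lemma dot_cat (X Y : 'cV[R]_(n + m)) :
  dot X Y = \sum_(i < n) X (lshift m i) 0 * Y (lshift m i) 0 +
            \sum_(j < m) X (rshift n j) 0 * Y (rshift n j) 0.
Proof. exact: big_split_ord. Qed.

Lemma gram_entry_lift p1 (v : bv n) (w : bv m) p2 i k :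
  gram_entry R (lift_seq p1 v w p2) i k = lifted_gram R (p1 ++ v :: p2) (size p1) (wtw w)%:R i k.
Proof.
rewrite /lifted_gram /gram_entry /edge !nth_lift_seq dot_cat; congr (_ + _).
  by apply: eq_bigr => j _; rewrite !mxE !catbv_lshift.
have wE x (b : bool) j :
    ((catbv x (if b then w else bv0 m) (rshift n j))%:R : R) = b%:R * (w j)%:R.
  by rewrite catbv_rshift; case: b; rewrite ?ffunE ?mul1r ?mul0r.
rewrite /wtw natr_sum !mulr_suml; apply: eq_bigr => j _; rewrite !mxE !wE.
by case: (w j) (size p1) => [] [|r] /=; rewrite ?eqSS; ring.
Qed.

Lemma acute_seq_lift p1 (v : bv n) (w : bv m) p2 :
  acute_seq R (lift_seq p1 v w p2) =
  acute_fun (size p1 + size p2) (lifted_gram R (p1 ++ v :: p2) (size p1) (wtw w)%:R).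
Proof.
rewrite acute_seqE size_cat /= size_map addnS size_map /=.
by apply: eq_acute_fun => i k _ _; rewrite gram_entry_lift.
Qed.

End LiftedGram.

Lemma ordering_setU1 (T : finType) (E : {set T}) u (s1 s2 : seq T) : u \notin E ->
  (uniq (s1 ++ u :: s2) /\ u |: E =i s1 ++ u :: s2) <-> (uniq (s1 ++ s2) /\ E =i s1 ++ s2).
Proof.
move=> uE; have perm_u : perm_eq (s1 ++ u :: s2) (u :: s1 ++ s2).
  exact/permEl/(perm_catCA s1 [:: u] s2).
rewrite (perm_uniq perm_u) cons_uniq; split=> [[/andP[us U] M]|[U M]].
  split=> // x; move: (M x); rewrite in_setU1 (perm_mem perm_u) in_cons.
  by have [->|] := eqVneq x u; rewrite ?(negbTE uE) ?(negbTE us).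
split=> [|x]; first by rewrite -M uE.
by rewrite in_setU1 (perm_mem perm_u) in_cons M.
Qed.

Section AcuteExtension.
Variable R : realFieldType.

Lemma acute_ext_split N (S : {set bv N}) v :
  acute_ext R S v <-> v \notin S /\
    exists p1 p2, [/\ uniq (p1 ++ p2), S =i p1 ++ p2 & acute_seq R (p1 ++ v :: p2)].
Proof.
split=> [[vS [s [_ us sE ac]]]|[vS [p1 [p2 [U M ac]]]]]; split=> //.
  have vs : v \in s by rewrite -sE setU11.
  move: us sE ac; case/splitPr: vs => s1 s2 us sE ac.
  by have [] := (ordering_setU1 s1 s2 vS).1 (conj us sE); exists s1, s2.
have [us sE] := (ordering_setU1 p1 p2 vS).2 (conj U M).
by exists (p1 ++ v :: p2); rewrite size_cat addnS.
Qed.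

Variables n m : nat.
Local Notation pad := (fun x : bv n => catbv x (bv0 m)).

Lemma mem_map_pad (p : seq (bv n)) (v : bv n) (w : bv m) :
  (catbv v w \in map pad p) = (v \in p) && (w == bv0 m).
Proof.
by apply/mapP/andP => [[x xp /catbv_inj[-> ->]]|[vp /eqP ->]] //; exists v.
Qed.

Lemma embedS_ordering (S : {set bv n}) p :
  (uniq (map pad p) /\ embedS m S =i map pad p) <-> (uniq p /\ S =i p).
Proof.
rewrite map_inj_uniq => [|x y /catbv_inj[] //].
split=> -[U M]; split=> //.
  by move=> x; move: (M (catbv x (bv0 m))); rewrite mem_embedS mem_map_pad eqxx !andbT.
by move=> z; rewrite -[z]catbvK mem_embedS mem_map_pad M.
Qed.

Lemma embedS_padK (S : {set bv n}) (s : seq (bv (n + m))) :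
  {subset s <= embedS m S} -> map pad (map (@fstb n m) s) = s.
Proof.
by move=> sS; rewrite -map_comp map_id_in // => z /sS/imsetP[x _ ->] /=; rewrite fstb_cat.
Qed.

Lemma acute_ext_embedS (S : {set bv n}) v (w : bv m) :
  acute_ext R (embedS m S) (catbv v w) <-> catbv v w \notin embedS m S /\
    exists p1 p2, [/\ uniq (p1 ++ p2), S =i p1 ++ p2 &
      acute_fun (size p1 + size p2) (lifted_gram R (p1 ++ v :: p2) (size p1) (wtw w)%:R)].
Proof.
rewrite acute_ext_split.
split=> [[uS [s1 [s2 [U M ac]]]]|[uS [p1 [p2 [U M ac]]]]]; split=> //.
  have E1 : map pad (map (@fstb n m) s1) = s1.
    by apply: (embedS_padK (S := S)) => z z1; rewrite M mem_cat z1.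
  have E2 : map pad (map (@fstb n m) s2) = s2.
    by apply: (embedS_padK (S := S)) => z z2; rewrite M mem_cat z2 orbT.
  set p1 := map _ s1 in E1; set p2 := map _ s2 in E2.
  rewrite -E1 -E2 -map_cat in U M; rewrite -E1 -E2 in ac; exists p1, p2.
  have [U' M'] := (embedS_ordering S (p1 ++ p2)).1 (conj U M).
  by rewrite -acute_seq_lift.
exists (map pad p1), (map pad p2); rewrite -map_cat.
have [U' M'] := (embedS_ordering S (p1 ++ p2)).2 (conj U M).
by split=> //; rewrite -/(lift_seq p1 v w p2) acute_seq_lift.
Qed.

End AcuteExtension.

Section BorderedMatrix.
Variables (R : realFieldType) (k : nat) (G : 'M[R]_k) (f : nat -> nat -> R).
Variables (y b : 'I_k -> R) (c : R).
Hypotheses (uG : G \in unitmx) (sG : G^T = G).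
Hypotheses (fG : forall i j : 'I_k, f i j = G i j) (fb : forall i : 'I_k, f i k = b i)
  (fbT : forall j : 'I_k, f k j = b j) (fc : f k k = c).
Hypothesis bG : forall i, b i = \sum_j G i j * y j.

Let M := invmx G.
(* The Schur complement of G in the bordered matrix [[G, G y], [y^T G, c]]. *)
Let d := c - \sum_i y i * b i.

Definition bordered_inv : 'M[R]_k.+1 := \matrix_(i, j)
  match unlift ord_max i, unlift ord_max j with
  | Some i', Some j' => M i' j' + y i' * y j' / d
  | Some i', None => - (y i' / d)
  | None, Some j' => - (y j' / d)
  | None, None => d^-1 end.

Let unlift_widen (l : 'I_k) : unlift ord_max (widen_ord (leqnSn k) l) = Some l.
Proof.
have -> : widen_ord (leqnSn k) l = lift ord_max l.
  by apply: val_inj; rewrite /= /bump leqNgt ltn_ord.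
by rewrite liftK.
Qed.

Let bM j : \sum_l b l * M l j = y j.
Proof.
have E : G *m (\col_i y i) = \col_i b i.
  by apply/matrixP => i z; rewrite !mxE bG; apply: eq_bigr => l _; rewrite mxE.
have := congr1 (fun A : 'cV_k => A j 0) (mulKmx uG (\col_i y i)).
rewrite E !mxE => <-; apply: eq_bigr => l _.
by rewrite mxE mulrC invmx_sym.
Qed.

Lemma bordered_mulmx_inv : d != 0 -> (\matrix_(i < k.+1, j < k.+1) f i j) *m bordered_inv = 1%:M.
Proof.
move=> d0.
have GM i j : \sum_l G i l * M l j = (i == j)%:R.
  by have := congr1 (fun A : 'M_k => A i j) (mulmxV uG); rewrite !mxE.
apply/matrixP => i j; rewrite !mxE big_ord_recr /=.
case: (unliftP ord_max i) => [i' ->|->]; case: (unliftP ord_max j) => [j' ->|->].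
- rewrite (inj_eq (@lift_inj _ ord_max)).
  under eq_bigr => l _ do rewrite !mxE unlift_widen liftK lift_max fG mulrDr.
  rewrite !mxE liftK unlift_none lift_max fb big_split /= GM.
  have -> : \sum_(l < k) G i' l * (y l * y j' / d) = b i' * y j' / d.
    by rewrite bG !mulr_suml; apply: eq_bigr => l _; rewrite !mulrA.
  by rewrite mulrN -addrA mulrA subrr addr0.
- rewrite eq_sym (negbTE (neq_lift _ _)) /=.
  under eq_bigr => l _ do rewrite !mxE unlift_widen unlift_none lift_max fG.
  rewrite !mxE unlift_none lift_max fb.
  have -> : \sum_(l < k) G i' l * - (y l / d) = - (b i' / d).
    by rewrite bG mulr_suml -sumrN; apply: eq_bigr => l _; rewrite mulrN mulrA.
  by rewrite addrC mulrC subrr.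
- rewrite (negbTE (neq_lift _ _)) /=.
  under eq_bigr => l _ do rewrite !mxE unlift_widen liftK /= fbT mulrDr.
  rewrite !mxE unlift_none liftK fc big_split /= bM.
  have -> : \sum_(l < k) b l * (y l * y j' / d) = (\sum_l y l * b l) * y j' / d.
    by rewrite !mulr_suml; apply: eq_bigr => l _; rewrite !mulrA (mulrC (b l)).
  have -> : y j' + (\sum_l y l * b l) * y j' / d + c * - (y j' / d) = y j' * (1 - d / d).
    by rewrite /d; ring.
  by rewrite mulfV // subrr mulr0.
- under eq_bigr => l _ do rewrite !mxE unlift_widen unlift_none /= fbT.
  rewrite !mxE unlift_none fc eqxx /=.
  have -> : \sum_(l < k) b l * - (y l / d) = - ((\sum_l y l * b l) / d).
    by rewrite mulr_suml -sumrN; apply: eq_bigr => l _; rewrite mulrN mulrA (mulrC (b l)).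
  have -> : - ((\sum_l y l * b l) / d) + c / d = d / d by rewrite /d; ring.
  by rewrite mulfV.
Qed.

Lemma acute_fun_bordered : acute_mx G -> 0 < d -> (forall i, 0 < y i) ->
  0 < 1 - \sum_j y j ->
  (forall i j, i != j -> y i * y j < d * - M i j) ->
  (forall i, y i * (1 - \sum_j y j) < d * \sum_j M i j) ->
  acute_fun k.+1 f.
Proof.
move=> aG d_gt0 y_gt0 l_gt0 off rs.
have E := bordered_mulmx_inv (lt0r_neq0 d_gt0); have [uF _] := mulmx1_unit E.
have iE : invmx (\matrix_(i < k.+1, j < k.+1) f i j) = bordered_inv.
  by rewrite -[RHS](mulKmx uF) E mulmx1.
apply/acute_mxP; split=> //; rewrite iE.
- move=> i j; rewrite !mxE.
  case: (unliftP ord_max i) => [i' ->|->]; case: (unliftP ord_max j) => [j' ->|->];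
    rewrite ?eqxx //; last 2 first.
  - by move=> _; rewrite oppr_lt0 divr_gt0.
  - by move=> _; rewrite oppr_lt0 divr_gt0.
  move=> ij.
  have ij' : i' != j' by apply: contra ij => /eqP ->.
  have : y i' * y j' / d < - M i' j' by rewrite ltr_pdivrMr // [_ * d]mulrC off.
  lra.
- move=> i; rewrite big_ord_recr /=.
  under eq_bigr => j _ do rewrite !mxE unlift_widen.
  rewrite !mxE unlift_none; case: (unliftP ord_max i) => [i' _|_] /=.
  + rewrite big_split /= -mulr_suml -mulr_sumr.
    have : y i' * (1 - \sum_j y j) / d < \sum_j M i' j by rewrite ltr_pdivrMr // [_ * d]mulrC rs.
    rewrite mulrBr mulr1 mulrBl; lra.
  + have -> : \sum_(j < k) - (y j / d) + d^-1 = (1 - \sum_j y j) / d.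
      by rewrite sumrN -mulr_suml; ring.
    by rewrite divr_gt0.
Qed.

End BorderedMatrix.

Section CandidateExtension.
Variables (R : realFieldType) (n m : nat) (S : {set bv n}).

Lemma sum_embedS (F : bv (n + m) -> R) :
  \sum_(z in embedS m S) F z = \sum_(x in S) F (catbv x (bv0 m)).
Proof. by rewrite big_imset // => x y _ _ /catbv_inj[]. Qed.

Lemma dot_embedS (lam : bv (n + m) -> R) (v : bv n) (w : bv m) x y :
  dot (vec R (catbv v w) - \sum_(z in embedS m S) lam z *: vec R z)
      (vec R (catbv x (bv0 m)) - vec R (catbv y (bv0 m)))
  = dot (vec R v - \sum_(z in S) lam (catbv z (bv0 m)) *: vec R z) (vec R x - vec R y).
Proof.
rewrite dot_cat [X in _ + X]big1 ?addr0 => [|j _]; last first.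
  by rewrite !mxE !catbv_rshift ffunE subrr mulr0.
apply: eq_bigr => i _; rewrite !mxE !catbv_lshift !summxE sum_embedS.
congr (_ * _); congr (_ - _).
by apply: eq_bigr => z _; rewrite !mxE catbv_lshift.
Qed.

Lemma cand_ext_embedS (u : bv (n + m)) :
  cand_ext R (embedS m S) u <-> exists v w, u = catbv v w /\ cand_ext R S v.
Proof.
have padS x : x \in S -> catbv x (bv0 m) \in embedS m S by rewrite mem_embedS eqxx andbT.
split=> [[lam [lam_gt0 lam1 orth]]|[v [w [-> [lam [lam_gt0 lam1 orth]]]]]].
  exists (fstb u), (sndb u); split; first by rewrite catbvK.
  exists (fun x => lam (catbv x (bv0 m))); split=> [x xS||x y xS yS]; first exact/lam_gt0/padS.
    by rewrite -sum_embedS.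
  by rewrite -(dot_embedS _ _ (sndb u)) catbvK orth ?padS.
exists (fun z => lam (fstb z)); split.
- by move=> _ /imsetP[x xS ->]; rewrite fstb_cat lam_gt0.
- by rewrite sum_embedS; under eq_bigr do rewrite fstb_cat.
- move=> _ _ /imsetP[x xS ->] /imsetP[y yS ->]; rewrite dot_embedS.
  by under eq_bigr do rewrite fstb_cat; apply: orth.
Qed.

End CandidateExtension.

Section DotLinear.
Variables (R : realFieldType) (N : nat).
Implicit Types X Y Z : 'cV[R]_N.

Lemma dotDr X Y Z : dot X (Y + Z) = dot X Y + dot X Z.
Proof. by rewrite /dot -big_split; apply: eq_bigr => i _; rewrite mxE mulrDr. Qed.

Lemma dotZr X Y a : dot X (a *: Y) = a * dot X Y.
Proof. by rewrite /dot mulr_sumr; apply: eq_bigr => i _; rewrite mxE mulrCA. Qed.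

Lemma dot_sumr K X (F : 'I_K -> 'cV[R]_N) : dot X (\sum_j F j) = \sum_j dot X (F j).
Proof.
rewrite /dot exchange_big; apply: eq_bigr => i _.
by rewrite summxE mulr_sumr.
Qed.

End DotLinear.

Section CandidateBorder.
Variables (R : realFieldType) (n k : nat) (S : {set bv n}) (sS : seq (bv n)).
Variables (v : bv n) (lam : bv n -> R).
Hypotheses (uS : uniq sS) (SE : S =i sS) (size_sS : size sS = k.+1).
Hypotheses (lam_gt0 : forall x, x \in S -> 0 < lam x) (lam1 : \sum_(x in S) lam x = 1).
Hypothesis orth : forall x y, x \in S -> y \in S ->
  dot (vec R v - \sum_(z in S) lam z *: vec R z) (vec R x - vec R y) = 0.

Let a j := nth (bv0 n) sS j.
Let y (j : 'I_k) := lam (a j.+1).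

Let big_S (V : nmodType) (F : bv n -> V) : \sum_(z in S) F z = \sum_(j < k.+1) F (a j).
Proof.
rewrite (eq_bigl (mem sS)) => [|z]; last by rewrite SE.
by rewrite -big_uniq // (big_nth (bv0 n)) size_sS big_mkord.
Qed.

Let a_in j : (j <= k)%N -> a j \in S.
Proof. by move=> jk; rewrite SE mem_nth // size_sS. Qed.

Lemma cand_weights : (forall j, 0 < y j) /\ \sum_j y j < 1.
Proof.
split=> [j|]; first exact/lam_gt0/a_in.
have := lam_gt0 (a_in (leq0n k)); rewrite -lam1 big_S big_ord_recl; lra.
Qed.

Lemma cand_border (i : 'I_k) :
  gram_entry R (sS ++ [:: v]) i k = \sum_(j < k) gram_entry R sS i j * y j.
Proof.
have affine : \sum_(z in S) lam z *: vec R z - vec R (a 0) = \sum_(j < k) y j *: edge R sS j.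
  rewrite big_S big_ord_recl.
  under [RHS]eq_bigr do rewrite scalerBr.
  rewrite sumrB -scaler_suml.
  have -> : lam (a 0) = 1 - \sum_j y j.
    by rewrite -lam1 big_S big_ord_recl addrK.
  by rewrite scalerBl scale1r addrAC [_ - _ - _]addrAC subrr add0r addrC.
rewrite /gram_entry /edge !nth_cat size_sS ltnn subnn ltnS ltn_ord /=.
rewrite -(subrK (\sum_(z in S) lam z *: vec R z) (vec R v)) -addrA affine dotDr.
rewrite dotC orth ?a_in ?ltn_ord // add0r dot_sumr.
by apply: eq_bigr => j _; rewrite dotZr mulrC.
Qed.

End CandidateBorder.

(* R need not be archimedean, but Gram matrices have integral entries, so the
   quantities to be dominated are images of rationals. *)
Section RationalBounds.
Variable R : realFieldType.

Lemma ratr_nat_bound (x : rat) : exists N : nat, (ratr x : R) <= N%:R.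
Proof.
exists (Num.Def.archi_bound `|x|); rewrite -(ratr_nat R) ler_rat.
exact/ltW/(le_lt_trans (ler_norm x))/archi_boundP.
Qed.

Lemma fin_nat_bound (I : finType) (F : I -> R) :
  (forall i, exists N : nat, F i <= N%:R) -> exists N : nat, forall i, F i <= N%:R.
Proof.
case/fin_all_exists => N hN; exists (\max_i N i) => i.
by apply: le_trans (hN i) _; rewrite ler_nat; apply: leq_bigmax.
Qed.

Lemma gram_entry_ratr N (s : seq (bv N)) i k : gram_entry R s i k = ratr (gram_entry rat s i k).
Proof.
rewrite /gram_entry /dot rmorph_sum; apply: eq_bigr => r _.
by rewrite !mxE rmorphM !rmorphB /= !ratr_nat.
Qed.

Lemma invmx_gram_ratr K N (s : seq (bv N)) (i j : 'I_K) :
  invmx (\matrix_(i < K, j < K) gram_entry R s i j) i j =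
  ratr (invmx (\matrix_(i < K, j < K) gram_entry rat s i j) i j).
Proof.
rewrite (_ : \matrix_(i, j) _ = map_mx ratr (\matrix_(i < K, j < K) gram_entry rat s i j)).
  by rewrite -map_invmx mxE.
by apply/matrixP => i' j'; rewrite !mxE gram_entry_ratr.
Qed.

Lemma invmx_gram_nat_bound N (s : seq (bv N)) K :
  let G := \matrix_(i < K, j < K) gram_entry R s i j in
  exists D : nat, (forall i j, (- invmx G i j)^-1 <= D%:R) /\
                  (forall i, (\sum_j invmx G i j)^-1 <= D%:R).
Proof.
move=> G; have [N1 h1] : exists N : nat, forall p, (- invmx G p.1 p.2)^-1 <= N%:R.
  apply: fin_nat_bound => -[i j]; rewrite invmx_gram_ratr -rmorphN -fmorphV.
  exact: ratr_nat_bound.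
have [N2 h2] : exists N : nat, forall i, (\sum_j invmx G i j)^-1 <= N%:R.
  apply: fin_nat_bound => i; under eq_bigr do rewrite invmx_gram_ratr.
  by rewrite -rmorph_sum -fmorphV; apply: ratr_nat_bound.
exists (N1 + N2)%N; split=> [i j|i].
  by apply: le_trans (h1 (i, j)) _; rewrite ler_nat leq_addr.
by apply: le_trans (h2 i) _; rewrite ler_nat leq_addl.
Qed.

End RationalBounds.

Lemma ler_sum_term (R : numDomainType) (I : finType) (F : I -> R) i :
  (forall j, 0 <= F j) -> F i <= \sum_j F j.
Proof. by move=> F_ge0; rewrite (bigD1 i) //= lerDl sumr_ge0. Qed.

Section AppendedVertex.
Variables (R : realFieldType) (n k : nat) (sS : seq (bv n)) (v : bv n).
Variables (y : 'I_k -> R) (t : R).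
Hypotheses (size_sS : size sS = k.+1) (aG : acute_fun k (gram_entry R sS)).
Hypotheses (y_gt0 : forall j, 0 < y j) (y_lt1 : \sum_j y j < 1).
Hypothesis border : forall i : 'I_k,
  gram_entry R (sS ++ [:: v]) i k = \sum_(j < k) gram_entry R sS i j * y j.

Let q := sS ++ [:: v].
Let G := \matrix_(i < k, j < k) gram_entry R sS i j.
Let d := gram_entry R q k k + t - \sum_i y i * gram_entry R q i k.

Lemma acute_fun_append : 0 < d ->
  (forall i j, i != j -> 1 <= d * - invmx G i j) ->
  (forall i, 1 <= d * \sum_j invmx G i j) ->
  acute_fun k.+1 (lifted_gram R q k.+1 t).
Proof.
move=> d_gt0 off rs; have /acute_mxP[uG _ _] := aG.
have sG : G^T = G by apply/matrixP => i j; rewrite !mxE gram_entryC.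
have qE (i j : 'I_k) : gram_entry R q i j = gram_entry R sS i j.
  by rewrite /gram_entry /edge !nth_cat size_sS /= !ltnS !ltn_ord.
have lift_lt (i : 'I_k) : lift_coef R k.+1 i = 0 by rewrite /= ltn_eqF.
have y_le_sum i : y i <= \sum_j y j by apply: ler_sum_term => j; apply/ltW.
have y_lt i : y i < 1 := le_lt_trans (y_le_sum i) y_lt1.
apply: (acute_fun_bordered (G := G) (y := y) (b := fun i => gram_entry R q i k)
  (c := gram_entry R q k k + t)) => //.
- by move=> i j; rewrite /lifted_gram lift_lt mulr0 mul0r addr0 qE mxE.
- by move=> i; rewrite /lifted_gram lift_lt mulr0 mul0r addr0.
- by move=> j; rewrite /lifted_gram lift_lt mulr0 addr0 gram_entryC.
- by rewrite /lifted_gram /= eqxx mulr1 mulr1.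
- by move=> i; rewrite border; apply: eq_bigr => j _; rewrite mxE.
- by rewrite subr_gt0.
- move=> i j ij; rewrite -/d; have := off i j ij.
  have : y i * y j < 1 by rewrite -(mulr1 1) ltr_pM // ltW.
  lra.
- move=> i; rewrite -/d; have := rs i.
  have : y i * (1 - \sum_j y j) < 1.
    have := y_gt0 i; have := y_le_sum i; move: y_lt1; nra.
  lra.
Qed.

End AppendedVertex.

Lemma wtw_eq0 m (w : bv m) : (wtw w == 0)%N = (w == bv0 m).
Proof.
rewrite /wtw sum_nat_eq0; apply/forallP/eqP => [w0|-> i]; last by rewrite ffunE.
by apply/ffunP => i; rewrite ffunE; move: (w0 i); case: (w i).
Qed.

Lemma wtw_ones T : wtw ([ffun => true] : bv T) = T.
Proof. by rewrite /wtw (eq_bigr (fun _ => 1%N)) ?sum1_card ?card_ord // => i _; rewrite ffunE. Qed.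

Section Threshold.
Variables (R : realFieldType) (n : nat) (S : {set bv n}) (v : bv n).

Lemma acute_ext_embedS_mono m1 m2 (w1 : bv m1) (w2 : bv m2) :
  acute_ext R (embedS m1 S) (catbv v w1) -> (wtw w1 <= wtw w2)%N ->
  acute_ext R (embedS m2 S) (catbv v w2).
Proof.
case/acute_ext_embedS => vwS [p1 [p2 [U M ac]]] le12; apply/acute_ext_embedS; split.
  move: vwS; rewrite !mem_embedS -!wtw_eq0; apply: contra => /andP[-> /eqP w0].
  by move: le12; rewrite w0 leqn0.
exists p1, p2; split=> //; apply: acute_fun_lift_mono ac.
- exact: gram_entryC.
- exact: leq_addr.
- by rewrite ler_nat.
Qed.

Lemma acute_ext_embedS_of_acute_ext m (w : bv m) :
  acute_ext R S v -> acute_ext R (embedS m S) (catbv v w).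
Proof.
case/acute_ext_split => vS [p1 [p2 [U M ac]]]; apply/acute_ext_embedS.
split; first by rewrite mem_embedS (negbTE vS).
exists p1, p2; split=> //; apply: (acute_fun_lift_mono (t1 := 0)).
- exact: gram_entryC.
- exact: leq_addr.
- exact: ler0n.
- rewrite acute_seqE size_cat addnS /= in ac.
  rewrite -(eq_acute_fun (f := gram_entry R (p1 ++ v :: p2))) // => i k _ _.
  by rewrite !mul0r addr0.
Qed.

End Threshold.

Lemma ler1_mul_inv (R : realFieldType) (x d : R) : 0 < x -> x^-1 <= d -> 1 <= d * x.
Proof. by move=> x_gt0; rewrite -ler_pdivrMr // div1r. Qed.

Lemma cand_ext_threshold (R : realFieldType) n (S : {set bv n}) (v : bv n) :
  is_acute R S -> cand_ext R S v ->
  exists T : nat, forall m (w : bv m), (T <= wtw w)%N -> acute_ext R (embedS m S) (catbv v w).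
Proof.
case=> sS [sS_gt0 uS SE ac] [lam [lam_gt0 lam1 orth]].
have : size sS = (size sS).-1.+1 by rewrite prednK.
move: (size sS).-1 => k size_sS; rewrite acute_seqE size_sS /= in ac.
have [y_gt0 y_lt1] := cand_weights uS SE size_sS lam_gt0 lam1.
have border := cand_border uS SE size_sS lam1 orth.
set q := sS ++ [:: v] in border *; set G := \matrix_(i < k, j < k) gram_entry R sS i j.
have /acute_mxP[_ off rs] := ac; rewrite -/G in off rs.
have [D [hoff hrow]] := invmx_gram_nat_bound R sS k; rewrite -/G in hoff hrow.
have [N3 hN3] : exists N : nat,
    \sum_(i < k) `|gram_entry R q i k| - gram_entry R q k k <= N%:R.
  under eq_bigr do rewrite gram_entry_ratr -ratr_norm.
  by rewrite gram_entry_ratr -rmorph_sum -rmorphB; apply: ratr_nat_bound.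
exists (D.+1 + N3)%N => m w Tw; apply/acute_ext_embedS; split.
  by rewrite mem_embedS -wtw_eq0 negb_and orbC -lt0n (leq_trans _ Tw).
exists sS, [::]; rewrite cats0 addn0 size_sS; split=> //.
have yb : \sum_(i < k) lam (nth (bv0 n) sS i.+1) * gram_entry R q i k
         <= \sum_(i < k) `|gram_entry R q i k|.
  apply: ler_sum => i _; apply: le_trans (ler_norm _) _.
  rewrite normrM gtr0_norm // ler_piMl // ltW // (le_lt_trans _ y_lt1) //.
  by apply: ler_sum_term => j; apply/ltW.
pose d := gram_entry R q k k + (wtw w)%:R -
  \sum_(i < k) lam (nth (bv0 n) sS i.+1) * gram_entry R q i k.
have dD : D.+1%:R <= d by move: Tw yb hN3; rewrite -(ler_nat R) !natrD /d; lra.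
have le_d x : x <= D%:R -> x <= d.
  by move=> xD; apply: le_trans xD (le_trans _ dD); rewrite ler_nat.
apply: (acute_fun_append size_sS ac y_gt0 y_lt1 border); rewrite -/d.
- by apply: lt_le_trans dD; rewrite ltr0Sn.
- move=> i j ij; apply: ler1_mul_inv (le_d _ (hoff i j)).
  by rewrite oppr_gt0 off.
- by move=> i; apply: ler1_mul_inv (rs i) (le_d _ (hrow i)).
Qed.

Unset Implicit Arguments.

Theorem theorem5p11 (R : realFieldType) (n : nat) (S : {set bv n}) :
  is_acute R S -> (#|S| <= n)%N ->
  (forall m : nat, (0 < m)%N ->
     (forall u : bv (n + m),
        cand_ext R (embedS m S) u <->
        exists (v : bv n) (w : bv m), u = catbv v w /\ cand_ext R S v) /\
     (forall (v : bv n) (w : bv m),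
        acute_ext R S v -> acute_ext R (embedS m S) (catbv v w))) /\
  (forall v : bv n, cand_ext R S v ->
     exists l : int, forall m : nat, (0 < m)%N -> forall w : bv m,
       (l <= (wtw w)%:Z) <-> acute_ext R (embedS m S) (catbv v w)).
Proof.
move=> aS _; split=> [m _|v vC].
  split=> [u|v w]; first exact: cand_ext_embedS.
  exact: acute_ext_embedS_of_acute_ext.
have [T acT] := cand_ext_threshold aS vC.
pose P t := exists m (w : bv m), wtw w = t /\ acute_ext R (embedS m S) (catbv v w).
have PT : P T.
  by exists T, [ffun => true]; rewrite wtw_ones; split=> //; apply: acT; rewrite wtw_ones.
have [t0 [[[m0 [w0 [w0E ac0]]] t0_min] _]] :=
  dec_inh_nat_subset_has_unique_least_element P (fun t => classic (P t)) (ex_intro _ T PT).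
exists t0%:Z => m _ w; rewrite lez_nat; split=> [le_t0|acw].
  by apply: (acute_ext_embedS_mono ac0); rewrite w0E.
by apply/ssrnat.leP/t0_min; exists m, w.
Qed.
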